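(* Let $w_k^A,w_k^B$ be the noise vectors associated with SDQ (see context), under the assumptions that rewards satisfy $|r(s,a,s')|\le1$, $\|Q_0^A\|_\infty,\|Q_0^B\|_\infty\le1$, $d(s,a)>0$ for all $(s,a)$, and constant $\alpha\in(0,1)$. Let $Q_k^{\mathrm{err}_{UL}}$ be defined by \[ Q_{k+1}^{\mathrm{err}_{UL}}=(I+\alpha\gamma DP\Pi_{Q^*}-\alpha D)Q_k^{\mathrm{err}_{UL}}+\alpha w_k^A-\alpha w_k^B \] from a deterministic initial vector $Q_0^{\mathrm{err}_{UL}}\in\mathbb{R}^{|\mathcal{S}||\mathcal{A}|}$. With $d_{\min}=\min_{(s,a)}d(s,a)$ and $\rho=1-\alpha d_{\min}(1-\gamma)$, for every $k\ge0$, \[ \mathbb{E}\big[\|Q_k^{\mathrm{err}_{UL}}\|_2\big]\le\frac{4\alpha^{1/2}|\mathcal{S}\times\mathcal{A}|}{d_{\min}^{1/2}(1-\gamma)^{3/2}}+|\mathcal{S}\times\mathcal{A}|\,\|Q_0^{\mathrm{err}_{UL}}\|_2\,\rho^k. \]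
   Context: Finite MDP with states $\mathcal{S}=\{1,\dots,|\mathcal{S}|\}$, actions $\mathcal{A}=\{1,\dots,|\mathcal{A}|\}$, transitions $P(s'|s,a)$, deterministic reward $r(s,a,s')$ with $|r|\le1$, discount $\gamma\in(0,1)$, optimal action-value function $Q^*$; the MDP is assumed ergodic. Sampling distribution $d(s,a)>0$; at iteration $k$, $(s_k,a_k)\sim d$ i.i.d., $s_k'\sim P(\cdot|s_k,a_k)$, $r_{k+1}=r(s_k,a_k,s_k')$. SDQ: only entry $(s_k,a_k)$ is updated, $Q_{k+1}^A(s_k,a_k)=Q_k^A(s_k,a_k)+\alpha\{r_{k+1}+\gamma Q_k^A(s_k',\arg\max_aQ_k^B(s_k',a))-Q_k^A(s_k,a_k)\}$ and symmetrically for $B$ with roles of $A,B$ swapped. Vector notation: $Q\in\mathbb{R}^{|\mathcal{S}||\mathcal{A}|}$ stacks $Q(\cdot,1),\dots,Q(\cdot,|\mathcal{A}|)$, so $Q(s,a)=(e_a\otimes e_s)^TQ$. $D$ is the diagonal matrix with entry $d(s,a)$ at position $(s,a)$. $P\in\mathbb{R}^{|\mathcal{S}||\mathcal{A}|\times|\mathcal{S}|}$ has row $(s,a)$ equal to $P(\cdot|s,a)$. $R(s,a)=\mathbb{E}[r(s,a,s')|s,a]$. For $Q$, $\pi_Q(s)=\arg\max_aQ(s,a)$ (fixed tie-breaking) and $\Pi_Q\in\mathbb{R}^{|\mathcal{S}|\times|\mathcal{S}||\mathcal{A}|}$ has $s$-th row $e_{\pi_Q(s)}^T\otimes e_s^T$.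 Noise: $w_k^A=(e_{a_k}\otimes e_{s_k})r_{k+1}+\gamma(e_{a_k}\otimes e_{s_k})e_{s_k'}^T\Pi_{Q_k^B}Q_k^A-(e_{a_k}\otimes e_{s_k})(e_{a_k}\otimes e_{s_k})^TQ_k^A-(DR+\gamma DP\Pi_{Q_k^B}Q_k^A-DQ_k^A)$, and $w_k^B$ is the same with $A$ and $B$ swapped. $|\mathcal{S}\times\mathcal{A}|=|\mathcal{S}||\mathcal{A}|$. *)

From HB Require Import structures.
From mathcomp Require Import all_boot all_order all_algebra.
From mathcomp Require Import reals.
Set Implicit Arguments. Unset Strict Implicit. Unset Printing Implicit Defensive.
Import Order.TTheory GRing.Theory Num.Theory.
Local Open Scope ring_scope.

Section SDQ.
Variables (R : realType) (S A : finType).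

(* Vectors in R^{|S||A|} are functions on the finite index type S * A;
   the coordinate (s,a) is Q (s,a) = (e_a ⊗ e_s)^T Q. *)
Definition vec := S * A -> R.

(* Transition kernel P(s'|s,a) = P s a s', reward r(s,a,s') = r s a s'. *)
Variables (P : S -> A -> S -> R) (r : S -> A -> S -> R).

Definition Rexp : vec := fun sa => \sum_(s' : S) P sa.1 sa.2 s' * r sa.1 sa.2 s'.

(* D Q : multiplication by the diagonal matrix with entries d(s,a) *)
Definition Dop (d : vec) (V : vec) : vec := fun sa => d sa * V sa.

(* P v : the |S||A| x |S| matrix P applied to v in R^{|S|} *)
Definition Pop (v : S -> R) : vec := fun sa => \sum_(s' : S) P sa.1 sa.2 s' * v s'.

(* Pi_Q V : the |S| x |S||A| matrix Pi_Q (row s = e_{pi_Q(s)}^T ⊗ e_s^T) applied to V *)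
Definition PiOp (pi : vec -> S -> A) (Q : vec) (V : vec) : S -> R :=
  fun s => V (s, pi Q s).

Definition evec (sa : S * A) : vec := fun x => (x == sa)%:R.

(* pi Q s is a greedy action argmax_a Q(s,a), with some fixed tie-breaking rule *)
Definition is_greedy (pi : vec -> S -> A) : Prop :=
  forall (Q : vec) (s : S) (a : A), Q (s, a) <= Q (s, pi Q s).

(* Q* : solution of the Bellman optimality equation
   Q*(s,a) = R(s,a) + gamma * sum_s' P(s'|s,a) max_a' Q*(s',a'),
   written with the greedy selector (Q*(s', pi Q* s') = max_a' Q*(s',a')). *)
Definition is_Qstar (gamma : R) (pi : vec -> S -> A) (Qs : vec) : Prop :=
  forall sa, Qs sa = Rexp sa + gamma * Pop (PiOp pi Qs Qs) sa.

Fixpoint pstep (mu : S -> A) (n : nat) (s s' : S) : R :=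
  match n with
  | 0 => (s == s')%:R
  | n.+1 => \sum_(x : S) P s (mu s) x * pstep mu n x s'
  end.

(* ergodicity: every deterministic stationary policy induces an irreducible chain *)
Definition ergodic : Prop :=
  forall (mu : S -> A) (s s' : S), exists n, 0 < pstep mu n s s'.

Definition is_min (d : vec) (m : R) : Prop :=
  (forall sa, m <= d sa) /\ (exists sa, d sa = m).

Definition norm2 (V : vec) : R := Num.sqrt (\sum_(sa : S * A) V sa ^+ 2).

(* A sample (s_k, a_k, s_k'); the reward is r_{k+1} = r s_k a_k s_k'. *)
Definition sample := (S * A * S)%type.

Variables (d : vec) (gamma alpha : R) (pi : vec -> S -> A) (Qstar : vec).

Definition sdq_step (QA QB : vec) (x : sample) : vec * vec :=
  let: (s, a, s') := x in
  (fun y => QA y + alpha * evec (s, a) y *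
              (r s a s' + gamma * QA (s', pi QB s') - QA (s, a)),
   fun y => QB y + alpha * evec (s, a) y *
              (r s a s' + gamma * QB (s', pi QA s') - QB (s, a))).

(* noise w_k^A = noise Q_k^A Q_k^B x_k,  w_k^B = noise Q_k^B Q_k^A x_k *)
Definition noise (Q1 Q2 : vec) (x : sample) : vec :=
  let: (s, a, s') := x in
  fun y => evec (s, a) y * r s a s'
           + gamma * evec (s, a) y * PiOp pi Q2 Q1 s'
           - evec (s, a) y * Q1 (s, a)
           - (Dop d Rexp y + gamma * Dop d (Pop (PiOp pi Q2 Q1)) y - Dop d Q1 y).

Definition joint_step (st : vec * vec * vec) (x : sample) : vec * vec * vec :=
  let: (QA, QB, Qe) := st in
  let wA := noise QA QB x in
  let wB := noise QB QA x in
  let Qe' : vec := fun y => Qe y + alpha * gamma * Dop d (Pop (PiOp pi Qstar Qe)) y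
                          - alpha * Dop d Qe y + alpha * wA y - alpha * wB y in
  let: (QA', QB') := sdq_step QA QB x in
  (QA', QB', Qe').

Fixpoint run (st : vec * vec * vec) (xs : seq sample) : vec * vec * vec :=
  match xs with
  | [::] => st
  | x :: xs' => run (joint_step st x) xs'
  end.

(* Q_k^{err_UL} as a function of the samples x_0, ..., x_{k-1} *)
Definition QerrUL (QA0 QB0 Qe0 : vec) (xs : seq sample) : vec :=
  (run (QA0, QB0, Qe0) xs).2.

Definition sample_prob (x : sample) : R :=
  let: (s, a, s') := x in d (s, a) * P s a s'.

(* expectation of a function of the first k i.i.d. samples *)
Definition Expect (k : nat) (f : seq sample -> R) : R :=
  \sum_(w : {ffun 'I_k -> sample})
     (\prod_(i : 'I_k) sample_prob (w i)) * f (map w (enum 'I_k)).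

End SDQ.

From HB Require Import structures.
From mathcomp Require Import all_boot all_order all_algebra.
From mathcomp Require Import reals boolp.
From mathcomp Require Import ring lra.
Import Order.TTheory GRing.Theory Num.Theory.
Local Open Scope ring_scope.

(* The error obeys Qe_{k+1} = M Qe_k + alpha (w^A_k - w^B_k) with
   M = I + alpha gamma D P Pi_{Q*} - alpha D, and M is a rho-contraction for the
   sup norm.  Unrolling, M^(k-j) Qe_j is a martingale in j: the noise difference
   has conditional mean zero, and since the SDQ iterates stay in the ball of
   radius 1/(1-gamma), its conditional second moment is at most 16/(1-gamma)^2.
   Orthogonality of the increments gives
     E |Qe_k|^2 <= |M^k Qe_0|^2 + 16 alpha^2 |S x A| / (1-gamma)^2 * sum_i rho^(2i),
   and sum_i rho^(2i) <= 1 / (alpha dmin (1-gamma)).  Jensen's inequality and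
   sqrt (a + b) <= sqrt a + sqrt b conclude. *)

Lemma sum_indicator {R : pzSemiRingType} {I : finType} (i0 : I) (F : I -> R) :
  \sum_i (i == i0)%:R * F i = F i0.
Proof. by under eq_bigr do rewrite mulr_natl mulrb; rewrite -big_mkcond big_pred1_eq. Qed.

Lemma natr_le_sqr {R : numDomainType} (m : nat) : (m%:R : R) <= m%:R ^+ 2.
Proof. by rewrite -natrX ler_nat; case: m => // m; rewrite leq_pmulr. Qed.

Lemma sqrtr_le {R : rcfType} (x y : R) : 0 <= y -> x <= y ^+ 2 -> Num.sqrt x <= y.
Proof. by move=> y_ge0 x_le; rewrite -(ger0_norm y_ge0) -sqrtr_sqr ler_wsqrtr. Qed.

Lemma sqrtrD_le {R : rcfType} (a b : R) : 0 <= a -> 0 <= b ->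
  Num.sqrt (a + b) <= Num.sqrt a + Num.sqrt b.
Proof.
move=> a_ge0 b_ge0; apply: sqrtr_le; first by rewrite addr_ge0 ?sqrtr_ge0.
by rewrite sqrrD !sqr_sqrtr // -addrA lerD2l lerDr mulrn_wge0 ?mulr_ge0 ?sqrtr_ge0.
Qed.

Lemma ler_sqr_of_normr_le {R : realDomainType} (x y : R) : `|x| <= y -> x ^+ 2 <= y ^+ 2.
Proof.
move=> x_le; have y_ge0 := le_trans (normr_ge0 x) x_le.
by rewrite -real_normK ?num_real // ler_sqr ?nnegrE.
Qed.

Section IidExpectation.
Context {R : realType} {T : finType} {p : T -> R}.

Definition Eprod (k : nat) (f : seq T -> R) : R :=
  \sum_(w : {ffun 'I_k -> T}) (\prod_(i : 'I_k) p (w i)) * f (map w (enum 'I_k)).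

Fixpoint Etower (k : nat) (f : seq T -> R) : R :=
  if k is k'.+1 then Etower k' (fun xs => \sum_x p x * f (rcons xs x)) else f [::].

Lemma Eprod_cons k f : Eprod k.+1 f = \sum_x p x * Eprod k (fun xs => f (x :: xs)).
Proof.
pose glue (xw : T * {ffun 'I_k -> T}) : {ffun 'I_k.+1 -> T} :=
  [ffun i => if unlift ord0 i is Some j then xw.2 j else xw.1].
pose split_head (w : {ffun 'I_k.+1 -> T}) := (w ord0, [ffun j => w (lift ord0 j)]).
have glueK : cancel split_head glue.
  move=> w; apply/ffunP => i; rewrite ffunE /=.
  by case: (unliftP ord0 i) => [j ->|->]; rewrite ?ffunE.
have split_headK : cancel glue split_head.
  move=> [x w]; rewrite /split_head ffunE unlift_none; congr (_, _).
  by apply/ffunP => j; rewrite !ffunE liftK.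
rewrite /Eprod (reindex glue) /=; last by exists split_head => ? _.
under [RHS]eq_bigr do rewrite mulr_sumr.
rewrite pair_bigA /=; apply: eq_bigr => -[x w] _ /=.
rewrite big_ord_recl enum_ordSl /= ffunE unlift_none -map_comp mulrA.
under eq_bigr do rewrite ffunE liftK.
by congr (_ * f (_ :: _)); apply: eq_map => i /=; rewrite ffunE liftK.
Qed.

Lemma Etower_cons k f : Etower k.+1 f = \sum_x p x * Etower k (fun xs => f (x :: xs)).
Proof.
elim: k f => [|k IH] f //.
by rewrite -[LHS]/(Etower k.+1 (fun xs => \sum_x p x * f (rcons xs x))) IH.
Qed.

Lemma Eprod_Etower k f : Eprod k f = Etower k f.
Proof.
elim: k f => [|k IH] f.
  rewrite /Eprod enum_ord0 /=.
  under eq_bigr do rewrite big_ord0 mul1r.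
  by rewrite sumr_const card_ffun card_ord expn0.
by rewrite Eprod_cons Etower_cons; apply: eq_bigr => x _; rewrite IH.
Qed.

Hypothesis p_ge0 : forall x, 0 <= p x.
Hypothesis p_sum1 : \sum_x p x = 1.

Lemma eq_Etower k f g :
  (forall xs, size xs = k -> f xs = g xs) -> Etower k f = Etower k g.
Proof.
elim: k f g => [|k IH] f g fg /=; first exact: fg.
apply: IH => xs xs_k; apply: eq_bigr => x _; rewrite fg // size_rcons xs_k //.
Qed.

Lemma ler_Etower k f g :
  (forall xs, size xs = k -> f xs <= g xs) -> Etower k f <= Etower k g.
Proof.
elim: k f g => [|k IH] f g fg /=; first exact: fg.
apply: IH => xs xs_k; apply: ler_sum => x _; apply: ler_wpM2l => //.
by rewrite fg // size_rcons xs_k //.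
Qed.

Lemma EtowerDr k f c : Etower k (fun xs => f xs + c) = Etower k f + c.
Proof.
elim: k f => [|k IH] f //=; rewrite -IH; apply: eq_Etower => xs _.
by rewrite -[X in _ + X]mul1r -p_sum1 mulr_suml -big_split; under eq_bigr do rewrite mulrDr.
Qed.

Lemma mean_sqr_add_centered (u c : R) (h : T -> R) : \sum_x p x * h x = 0 ->
  \sum_x p x * (u + c * h x) ^+ 2 = u ^+ 2 + c ^+ 2 * \sum_x p x * h x ^+ 2.
Proof.
move=> h_mean0.
have expand x : p x * (u + c * h x) ^+ 2
    = u ^+ 2 * p x + 2 * u * c * (p x * h x) + c ^+ 2 * (p x * h x ^+ 2) by ring.
under eq_bigr do rewrite expand.
by rewrite !big_split /= -!mulr_sumr h_mean0 p_sum1; ring.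
Qed.

Lemma second_moment_decomp (h : T -> R) :
  \sum_x p x * h x ^+ 2
  = (\sum_x p x * h x) ^+ 2 + \sum_x p x * (h x - \sum_y p y * h y) ^+ 2.
Proof.
set m := \sum_y p y * h y.
have centered : \sum_x p x * (h x - m) = 0.
  by under eq_bigr do rewrite mulrBr; rewrite sumrB -mulr_suml p_sum1 mul1r subrr.
have /= := mean_sqr_add_centered m 1 _ centered; rewrite expr1n mul1r => <-.
by apply: eq_bigr => x _; rewrite mul1r addrC subrK.
Qed.

Lemma sqr_mean_le (h : T -> R) : (\sum_x p x * h x) ^+ 2 <= \sum_x p x * h x ^+ 2.
Proof.
rewrite second_moment_decomp lerDl; apply: sumr_ge0 => x _.
by rewrite mulr_ge0 ?sqr_ge0.
Qed.

Lemma variance_le (h : T -> R) :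
  \sum_x p x * (h x - \sum_y p y * h y) ^+ 2 <= \sum_x p x * h x ^+ 2.
Proof. by rewrite [leRHS]second_moment_decomp lerDr sqr_ge0. Qed.

Lemma sqr_Etower_le k f : Etower k f ^+ 2 <= Etower k (fun xs => f xs ^+ 2).
Proof.
elim: k f => [|k IH] f //=.
by apply: le_trans (IH _) _; apply: ler_Etower => xs _; exact: sqr_mean_le.
Qed.

End IidExpectation.

Arguments Eprod {R T} p k f.
Arguments Etower {R T} p k f.

Section ErrorRecursion.
Variables (R : realType) (S A : finType).
Variables (P : S -> A -> S -> R) (r : S -> A -> S -> R) (d : S * A -> R)
  (gamma alpha : R) (pi : (S * A -> R) -> S -> A) (Qstar : S * A -> R) (dmin : R).

Definition Mop (V : S * A -> R) : S * A -> R :=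
  fun y => V y + alpha * gamma * Dop d (Pop P (PiOp pi Qstar V)) y - alpha * Dop d V y.

Definition Mpow (j : nat) : (S * A -> R) -> S * A -> R := iter j Mop.

Lemma Mop_add U V c : Mop (fun y => U y + c * V y) = (fun y => Mop U y + c * Mop V y).
Proof.
apply: funext => y; rewrite /Mop /Dop /Pop /PiOp.
under eq_bigr do rewrite mulrDr mulrCA.
by rewrite big_split /= -mulr_sumr; ring.
Qed.

Lemma Mop_sum (I : finType) (q : I -> R) (V : I -> S * A -> R) :
  Mop (fun y => \sum_i q i * V i y) = (fun y => \sum_i q i * Mop (V i) y).
Proof.
apply: funext => y; rewrite /Mop /Dop /Pop /PiOp.
under [RHS]eq_bigr do rewrite mulrBr mulrDr.
rewrite sumrB big_split /=; congr (_ + _ - _).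
  under [RHS]eq_bigr do rewrite !mulr_sumr.
  rewrite exchange_big !mulr_sumr; apply: eq_bigr => s' _.
  by rewrite !mulr_sumr; apply: eq_bigr => i _; ring.
by rewrite !mulr_sumr; apply: eq_bigr => i _; ring.
Qed.

Lemma Mpow_add j U V c :
  Mpow j (fun y => U y + c * V y) = (fun y => Mpow j U y + c * Mpow j V y).
Proof. by elim: j => //= j IH; rewrite IH Mop_add. Qed.

Lemma Mpow_sum j (I : finType) (q : I -> R) (V : I -> S * A -> R) :
  Mpow j (fun y => \sum_i q i * V i y) = (fun y => \sum_i q i * Mpow j (V i) y).
Proof. by elim: j => //= j IH; rewrite IH Mop_sum. Qed.

Hypothesis P_ge0 : forall s a s', 0 <= P s a s'.
Hypothesis P_sum1 : forall s a, \sum_(s' : S) P s a s' = 1.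
Hypothesis gamma01 : 0 < gamma < 1.
Hypothesis alpha01 : 0 < alpha < 1.
Hypothesis d_gt0 : forall sa, 0 < d sa.
Hypothesis d_le1 : forall sa, d sa <= 1.
Hypothesis dmin_le : forall sa, dmin <= d sa.

Definition rho := 1 - alpha * dmin * (1 - gamma).

Lemma Mop_sup_le V c : (forall z, `|V z| <= c) -> forall y, `|Mop V y| <= rho * c.
Proof.
move=> V_le y; have c_ge0 : 0 <= c := le_trans (normr_ge0 _) (V_le y).
set EV := \sum_s' P y.1 y.2 s' * V (s', pi Qstar s').
have EV_le : `|EV| <= c.
  apply: le_trans (ler_norm_sum _ _ _) _.
  rewrite -[c]mul1r -(P_sum1 y.1 y.2) mulr_suml; apply: ler_sum => s' _.
  by rewrite normrM ger0_norm ?ler_wpM2l.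
have -> : Mop V y = (1 - alpha * d y) * V y + (alpha * gamma * d y) * EV.
  by rewrite /Mop /Dop /Pop /PiOp -/EV; ring.
case/andP: gamma01 => g0 g1; case/andP: alpha01 => a0 a1.
have dy0 := d_gt0 y; have dy1 := d_le1 y; have dmin_dy := dmin_le y.
have w1 : 0 <= 1 - alpha * d y by nra.
have w2 : 0 <= alpha * gamma * d y by rewrite !mulr_ge0 ?ltW.
apply: le_trans (ler_normD _ _) _.
rewrite normrM (ger0_norm w1) normrM (ger0_norm w2).
have Vy_le := V_le y.
(* The two nonnegative weights add up to 1 - alpha * d y * (1 - gamma) <= rho. *)
have e1 : 0 <= (1 - alpha * d y) * (c - `|V y|) by apply: mulr_ge0; lra.
have e2 : 0 <= (alpha * gamma * d y) * (c - `|EV|) by apply: mulr_ge0; lra.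
have e3 : 0 <= alpha * (1 - gamma) * ((d y - dmin) * c).
  by apply: mulr_ge0; apply: mulr_ge0; lra.
rewrite /rho; nra.
Qed.

Lemma Mpow_sup_le j V c :
  (forall z, `|V z| <= c) -> forall y, `|Mpow j V y| <= rho ^+ j * c.
Proof.
move=> V_le; elim: j => [|j IH] y; first by rewrite mul1r.
by rewrite exprS -mulrA; exact: Mop_sup_le.
Qed.

Lemma Mpow0 j y : Mpow j (fun _ => 0) y = 0.
Proof.
apply/eqP; rewrite -normr_le0.
by have := Mpow_sup_le j (fun _ => 0) 0; rewrite mulr0; apply=> z; rewrite normr0.
Qed.

Lemma Mpow_sqr_le j V y : Mpow j V y ^+ 2 <= (rho ^+ 2) ^+ j * \sum_z V z ^+ 2.
Proof.
have sum_ge0 : 0 <= \sum_z V z ^+ 2 by rewrite sumr_ge0 // => z _; exact: sqr_ge0.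
have V_le z : `|V z| <= Num.sqrt (\sum_z V z ^+ 2).
  rewrite -sqrtr_sqr ler_wsqrtr // (bigD1 z) //= lerDl.
  by rewrite sumr_ge0 // => ? _; exact: sqr_ge0.
rewrite -exprM mulnC exprM -[X in _ * X](sqr_sqrtr sum_ge0) -exprMn.
exact: ler_sqr_of_normr_le (Mpow_sup_le j _ _ V_le y).
Qed.

Hypothesis r_le1 : forall s a s', `|r s a s'| <= 1.

Definition qbound := (1 - gamma)^-1.

Lemma qbound_fix : 1 + gamma * qbound = qbound.
Proof. by case/andP: gamma01 => _ g1; rewrite /qbound; field; rewrite subr_eq0 gt_eqF. Qed.

Lemma qbound_ge1 : 1 <= qbound.
Proof.
case/andP: gamma01 => g0 g1; rewrite -qbound_fix lerDl.
by apply: mulr_ge0; [exact: ltW | rewrite invr_ge0 subr_ge0 ltW].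
Qed.

(* The updated entry is a convex combination of Q1 (s, a) and a TD target of size
   at most 1 + gamma * qbound = qbound. *)
Lemma sdq_update_le (Q1 Q2 : S * A -> R) s a s' y :
  (forall z, `|Q1 z| <= qbound) ->
  `|Q1 y + alpha * evec R (s, a) y * (r s a s' + gamma * Q1 (s', pi Q2 s') - Q1 (s, a))|
    <= qbound.
Proof.
move=> Q1_le; rewrite /evec; case: eqP => [->|_]; last by rewrite mulr0 mul0r addr0.
case/andP: gamma01 => g0 _; case/andP: alpha01 => a0 a1.
have target_le : `|r s a s' + gamma * Q1 (s', pi Q2 s')| <= qbound.
  rewrite -qbound_fix; apply: le_trans (ler_normD _ _) _.
  rewrite normrM (gtr0_norm g0); apply: lerD; first exact: r_le1.
  by apply: ler_wpM2l; [exact: ltW | exact: Q1_le].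
rewrite mulr1.
have -> : Q1 (s, a) + alpha * (r s a s' + gamma * Q1 (s', pi Q2 s') - Q1 (s, a))
    = (1 - alpha) * Q1 (s, a) + alpha * (r s a s' + gamma * Q1 (s', pi Q2 s')) by ring.
rewrite [leRHS](_ : _ = (1 - alpha) * qbound + alpha * qbound); last by ring.
apply: le_trans (ler_normD _ _) _.
have a1' : 0 <= 1 - alpha by rewrite subr_ge0 ltW.
rewrite !normrM (ger0_norm a1') (gtr0_norm a0).
apply: lerD; first by apply: ler_wpM2l => //; apply: Q1_le.
by apply: ler_wpM2l; first exact: ltW.
Qed.

Lemma run_rcons st xs x :
  run P r d gamma alpha pi Qstar st (rcons xs x)
  = joint_step P r d gamma alpha pi Qstar (run P r d gamma alpha pi Qstar st xs) x.
Proof. by elim: xs st => //= y xs IH st; rewrite IH. Qed.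

Lemma joint_step_sdq QA QB Qe x :
  (joint_step P r d gamma alpha pi Qstar (QA, QB, Qe) x).1
  = sdq_step r gamma alpha pi QA QB x.
Proof. by case: x => [[s a] s']. Qed.

Lemma run_sdq_le st xs :
  (forall z, `|st.1.1 z| <= qbound) -> (forall z, `|st.1.2 z| <= qbound) ->
  (forall z, `|(run P r d gamma alpha pi Qstar st xs).1.1 z| <= qbound) /\
  (forall z, `|(run P r d gamma alpha pi Qstar st xs).1.2 z| <= qbound).
Proof.
elim: xs st => [|x xs IH] [[QA QB] Qe] /= QA_le QB_le; first by [].
by apply: IH; rewrite joint_step_sdq; case: x => [[s a] s'] /= z; exact: sdq_update_le.
Qed.

Hypothesis d_sum1 : \sum_sa d sa = 1.

Let pr := sample_prob P d.

Lemma pr_ge0 x : 0 <= pr x.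
Proof. by case: x => [[s a] s']; apply: mulr_ge0; [exact: ltW | exact: P_ge0]. Qed.

Lemma sum_sample (F : sample S A -> R) :
  \sum_x F x = \sum_(sa : S * A) \sum_(s' : S) F (sa, s').
Proof. by rewrite pair_bigA; apply: eq_bigr => -[[s a] s'] _. Qed.

Lemma pr_sum1 : \sum_x pr x = 1.
Proof.
rewrite sum_sample -d_sum1; apply: eq_bigr => -[s a] _.
by rewrite -[RHS]mulr1 -(P_sum1 s a) mulr_sumr.
Qed.

Definition td_sample (Q1 Q2 : S * A -> R) (x : sample S A) : S * A -> R :=
  let: (s, a, s') := x in
  fun y => evec R (s, a) y * (r s a s' + gamma * Q1 (s', pi Q2 s') - Q1 (s, a)).

Lemma td_sample_mean Q1 Q2 y : \sum_x pr x * td_sample Q1 Q2 x y =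
  Dop d (Rexp P r) y + gamma * Dop d (Pop P (PiOp pi Q2 Q1)) y - Dop d Q1 y.
Proof.
rewrite sum_sample.
pose G sa := d sa * \sum_s' P sa.1 sa.2 s' *
  (r sa.1 sa.2 s' + gamma * Q1 (s', pi Q2 s') - Q1 sa).
transitivity (\sum_sa (sa == y)%:R * G sa).
  apply: eq_bigr => -[s a] _; rewrite /G !mulr_sumr; apply: eq_bigr => s' _.
  by rewrite /pr /td_sample /evec /= eq_sym; ring.
rewrite sum_indicator /G /Dop /Rexp /Pop /PiOp.
under eq_bigr do rewrite !mulrDr mulrN mulrCA.
by rewrite sumrB big_split /= -mulr_suml -mulr_sumr P_sum1; ring.
Qed.

Lemma noise_centered Q1 Q2 x y :
  noise P r d gamma pi Q1 Q2 x y
  = td_sample Q1 Q2 x y - \sum_x' pr x' * td_sample Q1 Q2 x' y.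
Proof. by rewrite td_sample_mean; case: x => [[s a] s']; rewrite /= /PiOp; ring. Qed.

Definition noise_diff QA QB x y :=
  noise P r d gamma pi QA QB x y - noise P r d gamma pi QB QA x y.

Definition td_diff QA QB x y := td_sample QA QB x y - td_sample QB QA x y.

Lemma noise_diff_centered QA QB x y :
  noise_diff QA QB x y = td_diff QA QB x y - \sum_x' pr x' * td_diff QA QB x' y.
Proof.
rewrite /noise_diff /td_diff !noise_centered.
by under [in RHS]eq_bigr do rewrite mulrBr; rewrite sumrB; ring.
Qed.

Lemma noise_diff_mean0 QA QB y : \sum_x pr x * noise_diff QA QB x y = 0.
Proof.
under eq_bigr do rewrite noise_diff_centered mulrBr.
by rewrite sumrB -mulr_suml pr_sum1 mul1r subrr.
Qed.

(* Both TD samples are supported on the sampled entry (s, a). *)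
Lemma td_diff_sqr_le QA QB (B : R) x :
  (forall z, `|QA z| <= B) -> (forall z, `|QB z| <= B) ->
  \sum_y td_diff QA QB x y ^+ 2 <= 16 * B ^+ 2.
Proof.
case: x => [[s a] s'] QA_le QB_le.
set Z := gamma * (QA (s', pi QB s') - QB (s', pi QA s')) - (QA (s, a) - QB (s, a)).
have -> : \sum_y td_diff QA QB (s, a, s') y ^+ 2 = Z ^+ 2.
  rewrite -(sum_indicator (s, a) (fun _ => Z ^+ 2)); apply: eq_bigr => y _.
  by rewrite /td_diff /td_sample /evec /Z; case: (y == (s, a)) => /=; ring.
have := QA_le (s', pi QB s'); have := QB_le (s', pi QA s').
have := QA_le (s, a); have := QB_le (s, a).
rewrite !ler_norml => /andP[h1 h2] /andP[h3 h4] /andP[h5 h6] /andP[h7 h8].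
case/andP: gamma01 => g0 g1.
rewrite [leRHS](_ : _ = (4 * B) ^+ 2); last by ring.
by apply: ler_sqr_of_normr_le; rewrite ler_norml /Z; apply/andP; split; nra.
Qed.

Lemma noise_diff_second_moment QA QB (B : R) :
  (forall z, `|QA z| <= B) -> (forall z, `|QB z| <= B) ->
  \sum_x pr x * \sum_y noise_diff QA QB x y ^+ 2 <= 16 * B ^+ 2.
Proof.
move=> QA_le QB_le.
under eq_bigr do rewrite mulr_sumr.
rewrite exchange_big /=.
under eq_bigr do under eq_bigr do rewrite noise_diff_centered.
apply: le_trans (_ : \sum_y \sum_x pr x * td_diff QA QB x y ^+ 2 <= _).
  by apply: ler_sum => y _; exact: (variance_le pr_sum1).
rewrite exchange_big /= [leRHS](_ : _ = \sum_x pr x * (16 * B ^+ 2)); last first.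
  by rewrite -mulr_suml pr_sum1 mul1r.
apply: ler_sum => x _; rewrite -mulr_sumr ler_wpM2l ?pr_ge0 //.
exact: td_diff_sqr_le.
Qed.

Hypothesis dmin_gt0 : 0 < dmin.
Hypothesis dmin_le1 : dmin <= 1.

Let n : R := #|{: S * A}|%:R.

Lemma rho_ge0 : 0 <= rho.
Proof.
case/andP: gamma01 => g0 g1; case/andP: alpha01 => a0 a1.
have dm0 := dmin_gt0; have dm1 := dmin_le1.
have : alpha * dmin <= 1 by nra.
by rewrite /rho; nra.
Qed.

Lemma one_sub_sqr_rho_ge : alpha * dmin * (1 - gamma) <= 1 - rho ^+ 2.
Proof.
case/andP: gamma01 => g0 g1; case/andP: alpha01 => a0 a1.
have t_ge0 : 0 <= alpha * dmin * (1 - gamma) by rewrite !mulr_ge0 ?subr_ge0 ?ltW.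
have := mulr_ge0 t_ge0 rho_ge0; rewrite /rho; nra.
Qed.

Lemma one_sub_sqr_rho_gt0 : 0 < 1 - rho ^+ 2.
Proof.
case/andP: gamma01 => g0 g1; case/andP: alpha01 => a0 a1.
by apply: lt_le_trans one_sub_sqr_rho_ge; rewrite !mulr_gt0 ?subr_gt0.
Qed.

Lemma noise_const_ge0 : 0 <= alpha ^+ 2 * (n * (16 * qbound ^+ 2)).
Proof. by rewrite mulr_ge0 ?sqr_ge0 // mulr_ge0 ?ler0n // mulr_ge0 ?ler0n ?sqr_ge0. Qed.

Lemma Mpow_noise_diff_mean0 j QA QB y :
  \sum_x pr x * Mpow j (noise_diff QA QB x) y = 0.
Proof.
have /= <- := congr1 (fun f => f y) (Mpow_sum j _ pr (noise_diff QA QB)).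
have -> : (fun z => \sum_x pr x * noise_diff QA QB x z) = (fun _ => 0).
  by apply: funext => z; exact: noise_diff_mean0.
exact: Mpow0.
Qed.

Lemma Mpow_noise_diff_second_moment j QA QB (B : R) :
  (forall z, `|QA z| <= B) -> (forall z, `|QB z| <= B) ->
  \sum_x pr x * \sum_y Mpow j (noise_diff QA QB x) y ^+ 2
  <= n * (rho ^+ 2) ^+ j * (16 * B ^+ 2).
Proof.
move=> QA_le QB_le.
apply: le_trans (_ : _ <= \sum_x pr x * (n * (rho ^+ 2) ^+ j
                                         * \sum_y noise_diff QA QB x y ^+ 2)) _.
  apply: ler_sum => x _; apply: ler_wpM2l; first exact: pr_ge0.
  apply: le_trans (ler_sum _ (fun y _ => Mpow_sqr_le j (noise_diff QA QB x) y)) _.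
  by rewrite sumr_const -mulr_natl mulrA.
under eq_bigr do rewrite mulrCA.
rewrite -mulr_sumr; apply: ler_wpM2l; last exact: noise_diff_second_moment.
by apply: mulr_ge0; [exact: ler0n | apply: exprn_ge0; exact: sqr_ge0].
Qed.

(* The cross term vanishes because the noise has conditional mean zero. *)
Lemma Mpow_step_second_moment j QA QB (B : R) (U : S * A -> R) :
  (forall z, `|QA z| <= B) -> (forall z, `|QB z| <= B) ->
  \sum_x pr x * \sum_y (U y + alpha * Mpow j (noise_diff QA QB x) y) ^+ 2
  <= \sum_y U y ^+ 2 + alpha ^+ 2 * (n * (rho ^+ 2) ^+ j * (16 * B ^+ 2)).
Proof.
move=> QA_le QB_le.
under eq_bigr do rewrite mulr_sumr.
rewrite exchange_big /=.
under eq_bigr => y _ do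
  rewrite (mean_sqr_add_centered pr_sum1 _ _ _ (Mpow_noise_diff_mean0 j QA QB y)).
rewrite big_split /= lerD2l -mulr_sumr; apply: ler_wpM2l; first exact: sqr_ge0.
rewrite exchange_big /=; under eq_bigr do rewrite -mulr_sumr.
exact: Mpow_noise_diff_second_moment.
Qed.

Lemma joint_step_err QA QB Qe x :
  (joint_step P r d gamma alpha pi Qstar (QA, QB, Qe) x).2
  = (fun y => Mop Qe y + alpha * noise_diff QA QB x y).
Proof. by apply: funext => y; case: x => [[s a] s'] /=; rewrite /Mop /noise_diff /noise; ring. Qed.

Lemma Etower_Mpow_err_le (st0 : (S * A -> R) * (S * A -> R) * (S * A -> R)) k j :
  (forall z, `|st0.1.1 z| <= qbound) -> (forall z, `|st0.1.2 z| <= qbound) ->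
  (j <= k)%N ->
  Etower pr j (fun xs => \sum_y Mpow (k - j) (run P r d gamma alpha pi Qstar st0 xs).2 y ^+ 2)
  <= \sum_y Mpow k st0.2 y ^+ 2
     + alpha ^+ 2 * (n * (16 * qbound ^+ 2)) * (rho ^+ 2) ^+ (k - j) / (1 - rho ^+ 2).
Proof.
move=> QA0_le QB0_le; have q_gt0 := one_sub_sqr_rho_gt0.
elim: j => [_|j IH lt_jk].
  rewrite subn0 lerDl; apply: divr_ge0; last exact: ltW.
  by apply: mulr_ge0; [exact: noise_const_ge0 | apply: exprn_ge0; exact: sqr_ge0].
rewrite [Etower _ j.+1 _]/=.
apply: le_trans (ler_Etower pr_ge0 j _ (fun xs =>
    \sum_y Mpow (k - j) (run P r d gamma alpha pi Qstar st0 xs).2 y ^+ 2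
    + alpha ^+ 2 * (n * (rho ^+ 2) ^+ (k - j.+1) * (16 * qbound ^+ 2))) _) _.
  move=> xs _; under eq_bigr do rewrite run_rcons.
  have [] := run_sdq_le st0 xs QA0_le QB0_le.
  case: (run _ _ _ _ _ _ _ _ xs) => [[QA QB] Qe] /= QA_le QB_le.
  under eq_bigr do rewrite joint_step_err Mpow_add.
  have -> : Mpow (k - j.+1) (Mop Qe) = Mpow (k - j) Qe by rewrite /Mpow -iterSr subnSK.
  exact: Mpow_step_second_moment.
rewrite (EtowerDr pr_sum1); apply: le_trans (lerD (IH (ltnW lt_jk)) (lexx _)) _.
rewrite -(subnSK lt_jk) (exprS (rho ^+ 2)) -addrA lerD2l le_eqVlt.
by apply/predU1P; left; field; rewrite gt_eqF.
Qed.

Lemma noise_term_le :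
  Num.sqrt (alpha ^+ 2 * (n * (16 * qbound ^+ 2)) / (1 - rho ^+ 2))
  <= 4 * Num.sqrt alpha * n / (Num.sqrt dmin * Num.sqrt ((1 - gamma) ^+ 3)).
Proof.
case/andP: gamma01 => g0 g1; case/andP: alpha01 => a0 a1.
have dm0 := dmin_gt0; have g_gt0 : 0 < 1 - gamma by rewrite subr_gt0.
have g3_gt0 : 0 < (1 - gamma) ^+ 3 by rewrite exprn_gt0.
apply: sqrtr_le.
  by rewrite divr_ge0 ?mulr_ge0 ?sqrtr_ge0 ?ler0n.
rewrite expr_div_n !exprMn (sqr_sqrtr (ltW a0)) (sqr_sqrtr (ltW dm0)).
rewrite (sqr_sqrtr (ltW g3_gt0)).
apply: le_trans (_ : _ <= alpha ^+ 2 * (n * (16 * qbound ^+ 2))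
                          / (alpha * dmin * (1 - gamma))) _.
  apply: ler_wpM2l; first exact: noise_const_ge0.
  by rewrite lef_pV2 ?posrE ?one_sub_sqr_rho_gt0 ?one_sub_sqr_rho_ge ?mulr_gt0.
rewrite [leLHS](_ : _ = 16 * alpha * n / (dmin * (1 - gamma) ^+ 3)); last first.
  by rewrite /qbound; field; rewrite !gt_eqF.
apply: ler_wpM2r; first by rewrite invr_ge0 mulr_ge0 ?ltW.
rewrite [leRHS](_ : _ = 16 * alpha * n ^+ 2); last by ring.
by apply: ler_wpM2l; [rewrite mulr_ge0 ?ltW | exact: natr_le_sqr].
Qed.

Lemma init_term_le V k : Num.sqrt (\sum_y Mpow k V y ^+ 2) <= n * norm2 V * rho ^+ k.
Proof.
have sum_ge0 : 0 <= \sum_y V y ^+ 2 by rewrite sumr_ge0 // => y _; exact: sqr_ge0.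
apply: sqrtr_le.
  by rewrite !mulr_ge0 ?ler0n ?sqrtr_ge0 ?exprn_ge0 ?rho_ge0.
apply: le_trans (ler_sum _ (fun y _ => Mpow_sqr_le k V y)) _.
rewrite sumr_const -mulr_natl.
rewrite [leRHS](_ : _ = n ^+ 2 * ((rho ^+ 2) ^+ k * \sum_y V y ^+ 2)); last first.
  by rewrite /norm2 ![in LHS]exprMn sqr_sqrtr // exprAC; ring.
apply: ler_wpM2r; last exact: natr_le_sqr.
by apply: mulr_ge0 => //; apply: exprn_ge0; exact: sqr_ge0.
Qed.

Lemma Expect_norm2_err_le QA0 QB0 Qe0 k :
  (forall sa, `|QA0 sa| <= 1) -> (forall sa, `|QB0 sa| <= 1) ->
  Expect P d k (fun xs => norm2 (QerrUL P r d gamma alpha pi Qstar QA0 QB0 Qe0 xs))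
  <= 4 * Num.sqrt alpha * n / (Num.sqrt dmin * Num.sqrt ((1 - gamma) ^+ 3))
     + n * norm2 Qe0 * rho ^+ k.
Proof.
move=> QA0_le QB0_le; set st0 := (QA0, QB0, Qe0).
pose err xs := (run P r d gamma alpha pi Qstar st0 xs).2.
have err_le := Etower_Mpow_err_le st0 k k (fun z => le_trans (QA0_le z) qbound_ge1)
                 (fun z => le_trans (QB0_le z) qbound_ge1) (leqnn k).
rewrite subnn expr0 mulr1 /= in err_le.
have -> : Expect P d k (fun xs => norm2 (QerrUL P r d gamma alpha pi Qstar QA0 QB0 Qe0 xs))
          = Etower pr k (fun xs => norm2 (err xs)) := Eprod_Etower _ _.
apply: le_trans (_ : _ <= Num.sqrt (Etower pr k (fun xs => norm2 (err xs)) ^+ 2)) _.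
  by rewrite sqrtr_sqr ler_norm.
apply: le_trans (ler_wsqrtr (sqr_Etower_le pr_ge0 pr_sum1 _ _)) _.
rewrite (eq_Etower k _ (fun xs => \sum_y err xs y ^+ 2)); last first.
  by move=> xs _; rewrite sqr_sqrtr // sumr_ge0 // => y _; exact: sqr_ge0.
apply: le_trans (ler_wsqrtr err_le) _.
apply: le_trans (sqrtrD_le _ _ _ _) _.
- by rewrite sumr_ge0 // => y _; exact: sqr_ge0.
- exact: divr_ge0 noise_const_ge0 (ltW one_sub_sqr_rho_gt0).
- by rewrite addrC; apply: lerD; [exact: noise_term_le | exact: init_term_le].
Qed.

End ErrorRecursion.

Theorem lemma7 (R : realType) (S A : finType)
    (P : S -> A -> S -> R) (r : S -> A -> S -> R) (d : S * A -> R)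
    (gamma alpha : R) (pi : (S * A -> R) -> S -> A)
    (Qstar QA0 QB0 Qe0 : S * A -> R) (dmin : R) :
  (forall s a s', 0 <= P s a s') ->
  (forall s a, \sum_(s' : S) P s a s' = 1) ->
  ergodic P ->
  (forall s a s', `|r s a s'| <= 1) ->
  0 < gamma < 1 ->
  0 < alpha < 1 ->
  (forall sa, 0 < d sa) ->
  \sum_(sa : S * A) d sa = 1 ->
  is_greedy pi ->
  is_Qstar P r gamma pi Qstar ->
  (forall sa, `|QA0 sa| <= 1) ->
  (forall sa, `|QB0 sa| <= 1) ->
  is_min d dmin ->
  forall k : nat,
    Expect P d k (fun xs => norm2 (QerrUL P r d gamma alpha pi Qstar QA0 QB0 Qe0 xs))
    <= 4 * Num.sqrt alpha * #|{: S * A}|%:R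
         / (Num.sqrt dmin * Num.sqrt ((1 - gamma) ^+ 3))
       + #|{: S * A}|%:R * norm2 Qe0 * (1 - alpha * dmin * (1 - gamma)) ^+ k.
Proof.
move=> P_ge0 P_sum1 _ r_le1 gamma01 alpha01 d_gt0 d_sum1 _ _ QA0_le QB0_le.
move=> [dmin_le [sa0 d_sa0]] k.
have d_le1 sa : d sa <= 1.
  by rewrite -d_sum1 (bigD1 sa) //= lerDl sumr_ge0 // => ? _; exact: ltW.
have dmin_gt0 : 0 < dmin by rewrite -d_sa0.
have dmin_le1 : dmin <= 1 by rewrite -d_sa0.
exact: Expect_norm2_err_le.
Qed.
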